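(* For every weak composition $\alpha$, the underlying diagram (ignoring labels) of $\mathsf{snow}(D(\alpha))$ equals $\bigcup_{(r,c)\in\mathsf{dark}(\alpha)}\big(([r]\times\{c\})\cup(\{r\}\times[c])\big)$.
   Context: A weak composition is an infinite sequence of nonnegative integers with finitely many positive entries. $D(\alpha)=\{(r,c):1\le c\le\alpha_r\}$, $(r,c)$ being the cell in row $r$ (row 1 on top), column $c$; $[m]=\{1,\dots,m\}$. For a diagram $D$, $\mathsf{snow}(D)$ is built by iterating through rows from bottom to top: in row $r$ take the rightmost cell $(r,c)\in D$ such that column $c$ contains no dark cloud yet; if it exists label it a dark cloud and add snowflake cells at $(r',c)$ for all $r'<r$ with $(r',c)\notin D$. $\mathsf{dark}(\alpha)$ is the set of dark-cloud cells of $\mathsf{snow}(D(\alpha))$. *)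

From mathcomp Require Import all_boot.
Set Implicit Arguments. Unset Strict Implicit. Unset Printing Implicit Defensive.

(* A cell (r, c): row r (row 1 on top), column c. *)
Definition cell := (nat * nat)%type.

(* A weak composition is represented by the finite list of its entries
   alpha_1, alpha_2, ...; all later entries are 0.  alpha_r = nth 0 a r.-1. *)
Definition wcomp_entry (a : seq nat) (r : nat) : nat := nth 0 a r.-1.

Definition diagram (a : seq nat) : seq cell :=
  [seq (r, c) | r <- iota 1 (size a), c <- iota 1 (wcomp_entry a r)].

Definition max_row (D : seq cell) : nat := foldr maxn 0 [seq x.1 | x <- D].

(* One step of the snow construction, processing row r given the list of
   dark clouds already placed: take the rightmost cell (r,c) of D whose
   column c contains no dark cloud yet, and make it a dark cloud. *)
Definition snow_step (D : seq cell) (dark : seq cell) (r : nat) : seq cell :=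
  let cands := [seq x <- D | (x.1 == r) && (x.2 \notin map snd dark)] in
  if cands is [::] then dark else (r, foldr maxn 0 [seq x.2 | x <- cands]) :: dark.

(* Dark clouds of snow(D): iterate through rows from bottom to top. *)
Definition snow_dark (D : seq cell) : seq cell :=
  foldl (snow_step D) [::] (rev (iota 1 (max_row D))).

Definition snowflake (D : seq cell) (x : cell) : bool :=
  (x \notin D) &&
  has (fun d : cell => (1 <= x.1 < d.1) && (x.2 == d.2)) (snow_dark D).

Definition snow_underlying (D : seq cell) (x : cell) : bool :=
  (x \in D) || snowflake D x.

Definition dark (a : seq nat) : seq cell := snow_dark (diagram a).

(** Every dark cloud is a cell of [D(alpha)].  Snowflakes sit above dark
    clouds in their columns, so they lie on the vertical arms; conversely a
    cell of a vertical arm is in [D(alpha)] or is a snowflake, and a cell of a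
    horizontal arm is in [D(alpha)] because its rows are left-justified.  For
    the remaining inclusion, look at a cell [(r, c)] of [D(alpha)] when row [r]
    is processed: either column [c] already holds a dark cloud, necessarily in
    a lower row, or [(r, c)] is a candidate and the dark cloud chosen in row
    [r] lies weakly to its right. *)

From mathcomp Require Import all_boot.
From mathcomp Require Import zify.

Set Implicit Arguments.
Unset Strict Implicit.
Unset Printing Implicit Defensive.

Lemma leq_foldr_maxn (s : seq nat) x : x \in s -> x <= foldr maxn 0 s.
Proof.
elim: s => // y s IH; rewrite inE leq_max => /orP [/eqP ->|/IH ->].
  by rewrite leqnn.
by rewrite orbT.
Qed.

Lemma foldr_maxn_mem (s : seq nat) : s != [::] -> foldr maxn 0 s \in s.
Proof.
elim: s => // x [|y s] IH _; first by rewrite /= maxn0 mem_seq1.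
rewrite -[foldr _ _ (x :: _)]/(maxn x (foldr maxn 0 (y :: s))) inE.
by case: leqP => _; rewrite ?eqxx ?IH ?orbT.
Qed.

Lemma mem_diagram a r c :
  ((r, c) \in diagram a) = (1 <= r <= size a) && (1 <= c <= wcomp_entry a r).
Proof.
apply/allpairsPdep/andP => [[x [y [+ + [-> ->]]]]|[rP cP]].
  by rewrite !mem_iota; split; lia.
by exists r, c; rewrite !mem_iota; split => //; lia.
Qed.

Lemma mem_diagram_left a r c c' :
  (r, c) \in diagram a -> 1 <= c' <= c -> (r, c') \in diagram a.
Proof. by rewrite !mem_diagram; lia. Qed.

Section SnowDark.

Variable D : seq cell.

Lemma snow_step_sub S r : {subset S <= snow_step D S r}.
Proof.
move=> x xS; rewrite /snow_step.
by case: [seq _ <- D | _] => // y l; rewrite inE xS orbT.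
Qed.

Lemma mem_snow_step S r x :
  x \in snow_step D S r -> x \in S \/ (x.1 = r /\ x \in D).
Proof.
rewrite /snow_step; set cands := [seq _ <- D | _].
case Ecands: cands => [|y l]; first by left.
rewrite inE => /orP [/eqP ->|]; last by left.
have /mapP [z] := foldr_maxn_mem (isT : [seq z.2 | z <- y :: l] != [::]).
rewrite -Ecands mem_filter => /andP [/andP [/eqP <- _] zD] ->.
by right; case: z zD.
Qed.

Lemma snow_step_cover S r c : (r, c) \in D ->
  exists2 d, d \in snow_step D S r &
    (d \in S /\ d.2 = c) \/ (d.1 = r /\ c <= d.2).
Proof.
move=> rcD; have [/mapP [d dS ->]|cS] := boolP (c \in map snd S).
  by exists d; [apply: snow_step_sub | left].
rewrite /snow_step; set cands := [seq _ <- D | _].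
have rc_cand : (r, c) \in cands by rewrite mem_filter /= eqxx cS rcD.
case Ecands: cands rc_cand => [//|y l] rc_cand.
exists (r, foldr maxn 0 [seq x.2 | x <- y :: l]); first exact: mem_head.
by right; split => //; exact: leq_foldr_maxn (map_f snd rc_cand).
Qed.

Lemma foldl_snow_step_sub S s : {subset S <= foldl (snow_step D) S s}.
Proof.
move=> x; elim: s S => [//|r s IH] S xS /=.
by apply: IH; apply: snow_step_sub.
Qed.

Lemma mem_foldl_snow_step S s x :
  x \in foldl (snow_step D) S s -> x \in S \/ (x.1 \in s /\ x \in D).
Proof.
elim: s S => [|r s IH] S /=; first by left.
move=> /IH [/mem_snow_step [xS|[<- xD]]|[xs xD]]; first by left.
  by right; rewrite mem_head.
by right; rewrite inE xs orbT.
Qed.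

Lemma snow_dark_sub : {subset snow_dark D <= D}.
Proof. by move=> x /mem_foldl_snow_step [|[]]. Qed.

Lemma snow_dark_cover r c : (r, c) \in D -> 1 <= r ->
  exists2 d, d \in snow_dark D & (r < d.1 /\ c = d.2) \/ (r = d.1 /\ c <= d.2).
Proof.
move=> rcD r_gt0; set m := max_row D.
have le_r_m : r <= m by apply: leq_foldr_maxn; apply: (map_f fst rcD).
have rows : rev (iota 1 m) = rev (iota r.+1 (m - r)) ++ r :: rev (iota 1 r.-1).
  rewrite {1}(_ : m = r.-1 + (m - r).+1) ?iotaD; last by lia.
  rewrite (_ : 1 + r.-1 = r); last by lia.
  by rewrite rev_cat rev_cons cat_rcons.
rewrite /snow_dark -/m rows foldl_cat /=.
set S := foldl _ [::] _.
have [d dstep [[dS <-]|dr]] := snow_step_cover S rcD.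
- exists d; first exact: foldl_snow_step_sub.
  left; split => //; case/mem_foldl_snow_step: dS => [//|[]].
  by rewrite mem_rev mem_iota => /andP [].
- by exists d; [apply: foldl_snow_step_sub | right; case: dr].
Qed.

Lemma snow_underlying_above_dark dr dc r : (dr, dc) \in snow_dark D ->
  1 <= r <= dr -> snow_underlying D (r, dc).
Proof.
move=> dark_d /andP [r_gt0 le_r_dr]; rewrite /snow_underlying /snowflake.
have [//|rcD /=] := boolP ((r, dc) \in D).
apply/hasP; exists (dr, dc) => //=.
rewrite r_gt0 eqxx andbT ltn_neqAle le_r_dr andbT.
by apply: contraNneq rcD => ->; apply: snow_dark_sub.
Qed.

End SnowDark.

Theorem lemma4p14 (a : seq nat) (r c : nat) :
  snow_underlying (diagram a) (r, c) <->
  exists2 d : cell, d \in dark a &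
    ((1 <= r <= d.1) /\ c = d.2) \/ (r = d.1 /\ 1 <= c <= d.2).
Proof.
split.
  case/orP => [rcD|/andP [_ /hasP [d dark_d /=]]].
    have := rcD; rewrite mem_diagram => /andP [/andP [r_gt0 _] /andP [c_gt0 _]].
    have [d dark_d [[/ltnW le_r_d ->]|[-> le_c_d]]] :=
      snow_dark_cover rcD r_gt0.
      by exists d => //; left; rewrite r_gt0.
    by exists d => //; right; rewrite c_gt0.
  case/andP => /andP [r_gt0 /ltnW le_r_d] /eqP ->.
  by exists d => //; left; rewrite r_gt0.
case=> [[dr dc]] dark_d /= [[r_in ->]|[-> c_in]].
  exact: snow_underlying_above_dark dark_d r_in.
by apply/orP; left; apply: mem_diagram_left c_in; apply: snow_dark_sub.
Qed.
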